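(* Let $\alpha>0>\beta$ with $|\beta|<\alpha$, and put $\delta=\left(\frac{\alpha-\beta}{\alpha+\beta}\right)^2>1$, $K=\frac{2\alpha}{(\alpha+\beta)^2}$, $M=\delta^{\frac{1}{1-\delta}}-\delta^{\frac{\delta}{1-\delta}}$ and $T_M=\frac{\ln\delta}{K(\delta-1)}$. Let $\omega>0$, $\gamma>0$, $k_1>0$, and for $T\ge 0$, $s\in\mathbb{R}$, $y>0$ let $$\mathcal{G}_T(s,y)=\left(s-\frac{\ln y}{K}-T,\; y^{\delta}+\gamma\bigl(1+k_1\sin(2\omega s)\bigr)\right).$$ If $\gamma=M/(1+k_1)$ or $\gamma=M/(1-k_1)$, and $T=T_M$, then at every fixed point $(s,y)$ of $\mathcal{G}_T$ the derivative $D\mathcal{G}_T(s,y)$ has $1$ as a double eigenvalue and is not the identity. Moreover, these are the only situations in which $D\mathcal{G}_T(s,y)$ has a double eigenvalue $1$ at a fixed point $(s,y)$ of $\mathcal{G}_T$. *)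

From HB Require Import structures.
From mathcomp Require Import all_boot all_order all_algebra.
From mathcomp Require Import all_classical all_reals all_analysis.
Set Implicit Arguments. Unset Strict Implicit. Unset Printing Implicit Defensive.
Import Order.TTheory GRing.Theory Num.Theory.
Local Open Scope ring_scope.

Section Defs.
Variable R : realType.

Definition GT (delta K T gamma k1 omega : R) (s y : R) : R * R :=
  (s - ln y / K - T, y `^ delta + gamma * (1 + k1 * sin (2 * omega * s))).

Definition partial1 (f : R -> R -> R) (s y : R) : R := derive1 (fun t => f t y) s.
Definition partial2 (f : R -> R -> R) (s y : R) : R := derive1 (fun t => f s t) y.

Definition jac2 (F : R -> R -> R * R) (s y : R) : 'M[R]_2 :=
  \matrix_(i < 2, j < 2)
    (let fi := fun a b => if i == 0 :> nat then (F a b).1 else (F a b).2 in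
     if j == 0 :> nat then partial1 fi s y else partial2 fi s y).

Definition double_eigenvalue_one (A : 'M[R]_2) : Prop :=
  char_poly A = ('X - 1%:P) ^+ 2.

End Defs.

(* The Jacobian of G_T at (s, y) is
   [[1, -1/(K y)], [2 omega gamma k1 cos (2 omega s), delta y^(delta - 1)]].
   Its characteristic polynomial is (X - 1)^2 iff its trace is 2 and its
   determinant is 1, i.e. iff delta y^(delta - 1) = 1 and cos (2 omega s) = 0;
   the upper right entry never vanishes, so it is never the identity.  The
   first condition says that y is the critical point y* = delta^(1/(1-delta))
   of y - y^delta.  At a fixed point the first coordinate gives ln y = -K T,
   so y = y* iff T = T_M, and then the second coordinate reads
   gamma (1 + k1 sin (2 omega s)) = y* - y*^delta = M; finally
   cos (2 omega s) = 0 iff sin (2 omega s) = +-1 iff gamma = M / (1 +- k1). *)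

From HB Require Import structures.
From mathcomp Require Import all_boot all_order all_algebra.
From mathcomp Require Import all_classical all_reals all_analysis.
From mathcomp Require Import ring lra.
Set Implicit Arguments. Unset Strict Implicit. Unset Printing Implicit Defensive.
Import Order.TTheory GRing.Theory Num.Theory.
Local Open Scope ring_scope.

Section CharPolyMx2.
Variable R : comNzRingType.
Implicit Type A : 'M[R]_2.

Lemma mxtrace_mx2 A : \tr A = A 0 0 + A 1 1.
Proof.
by rewrite /mxtrace !big_ord_recl big_ord0 addr0; congr (_ + A _ _); apply: val_inj.
Qed.

Lemma det_mx2 A : \det A = A 0 0 * A 1 1 - A 0 1 * A 1 0.
Proof.
rewrite (expand_det_row _ 0) !big_ord_recl big_ord0 /cofactor !det_mx11 !mxE /=.
rewrite addr0 expr0 mul1r expr1 /= mulN1r mulrN.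
by congr (_ * A _ _ - _ * A _ _); try congr (A _ _); apply: val_inj.
Qed.

Lemma char_poly_mx2 A : char_poly A = 'X^2 - (\tr A) *: 'X + (\det A)%:P.
Proof.
have size_chA := size_char_poly A.
apply/polyP => -[|[|[|i]]].
- by rewrite char_poly_det expr2 mulrNN !mul1r !coefE /=; ring.
- by have /= -> := char_poly_trace A (isT : 0 < 2)%N; rewrite !coefE /=; ring.
- have /monicP := char_poly_monic A; rewrite lead_coefE size_chA /= => ->.
  by rewrite !coefE /=; ring.
- by rewrite (leq_sizeP _ _ (eq_leq size_chA)) // !coefE /= mulr0 subr0 addr0.
Qed.

Lemma XsubC1_sqr : ('X - 1%:P) ^+ 2 = 'X^2 - 2 *: 'X + 1%:P :> {poly R}.
Proof. by rewrite sqrrB expr1n mulr1 scaler_nat polyC1. Qed.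

Lemma char_poly_mx2_XsubC1_sqr A :
  char_poly A = ('X - 1%:P) ^+ 2 <-> \tr A = 2 /\ \det A = 1.
Proof.
rewrite char_poly_mx2 XsubC1_sqr; split => [E | [-> ->] //].
have := congr1 (fun p : {poly R} => p`_1) E; have := congr1 (fun p : {poly R} => p`_0) E.
by rewrite !coefE /= !mulr0 !mulr1 !sub0r !addr0 oppr0 !add0r => -> /oppr_inj.
Qed.

Lemma char_poly_mx2_XsubC1_sqr_e00 A : A 0 0 = 1 ->
  char_poly A = ('X - 1%:P) ^+ 2 <-> A 1 1 = 1 /\ A 0 1 * A 1 0 = 0.
Proof.
move=> A00; rewrite char_poly_mx2_XsubC1_sqr mxtrace_mx2 det_mx2 A00 mul1r.
split=> [[/addrI A11 detA] | [A11 ->]]; last by rewrite A11 subr0.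
split=> //; apply/oppr_inj/(@addrI _ 1).
by rewrite oppr0 addr0 -[in LHS]A11.
Qed.
End CharPolyMx2.

Lemma eq_div_1DM (F : fieldType) (g k S m c : F) :
  g != 0 -> k != 0 -> m != 0 -> g * (1 + k * S) = m ->
  g = m / (1 + k * c) <-> S = c.
Proof.
move=> g_neq0 k_neq0 m_neq0 gS; split=> [gc | Sc].
  have kc_neq0 : 1 + k * c != 0.
    by apply: contra_neq g_neq0 => kc0; rewrite gc kc0 invr0 mulr0.
  have : g * (1 + k * S) = g * (1 + k * c) by rewrite gS gc divfK.
  by move/(mulfI g_neq0)/addrI/(mulfI k_neq0).
have kc_neq0 : 1 + k * c != 0.
  by apply: contra_neq m_neq0 => kc0; rewrite -gS Sc kc0 mulr0.
by rewrite -gS Sc mulfK.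
Qed.

Lemma eq_div1D_or_div1B (F : fieldType) (g k S m : F) :
  g != 0 -> k != 0 -> m != 0 -> g * (1 + k * S) = m ->
  g = m / (1 + k) \/ g = m / (1 - k) <-> S = 1 \/ S = -1.
Proof.
move=> g_neq0 k_neq0 m_neq0 gS.
rewrite -(eq_div_1DM 1 g_neq0 k_neq0 m_neq0 gS).
rewrite -(eq_div_1DM (-1) g_neq0 k_neq0 m_neq0 gS).
by rewrite mulr1 mulrN1.
Qed.

Section RealFacts.
Variable R : realType.

Lemma cos_eq0_sin_pm1 (x : R) : cos x = 0 <-> sin x = 1 \/ sin x = -1.
Proof.
rewrite (rwP eqP) -sqrf_eq0 cos2sin2 subr_eq0 eq_sym sqrf_eq1.
by split=> [/orP[]/eqP|[]->]; [left | right | rewrite eqxx | rewrite eqxx orbT].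
Qed.

Lemma gt1_ltr_powR (a : R) : 1 < a -> {homo powR a : x y / x < y}.
Proof.
move=> a_gt1 x y xy; rewrite /powR gt_eqF ?(lt_trans ltr01) // ltr_expR.
by rewrite ltr_pM2r // ln_gt0.
Qed.

Lemma ltr_powR_div1B (d : R) : 1 < d -> d `^ (d / (1 - d)) < d `^ (1 - d)^-1.
Proof.
move=> d_gt1; apply: gt1_ltr_powR => //.
by rewrite -[X in _ < X]mul1r ltr_nM2r // invr_lt0 subr_lt0.
Qed.

Lemma mul_powR_eq1 (d y : R) : 0 < d -> d != 1 -> 0 < y ->
  d * y `^ (d - 1) = 1 <-> y = d `^ (1 - d)^-1.
Proof.
move=> d_gt0 d_neq1 y_gt0; have d1_neq0 : 1 - d != 0 by rewrite subr_eq0 eq_sym.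
have lnP (u v : R) : 0 < u -> 0 < v -> u = v <-> ln u = ln v.
  by move=> u_gt0 v_gt0; split=> [-> // | /ln_inj]; apply; rewrite posrE.
rewrite (lnP _ 1) ?mulr_gt0 ?powR_gt0 // (lnP y) ?powR_gt0 //.
rewrite lnM ?posrE ?powR_gt0 //.
rewrite !ln_powR ln1; split=> [lnE | ->]; last by field.
by apply: (mulfI d1_neq0); rewrite mulrA mulfV // mul1r; lra.
Qed.

Lemma sqr_divBD_gt1 (a b : R) : b < 0 < a + b -> 1 < ((a - b) / (a + b)) ^+ 2.
Proof.
case/andP=> b_lt0 ab_gt0.
have q_gt1 : 1 < (a - b) / (a + b) by rewrite ltr_pdivlMr // mul1r; lra.
by rewrite expr2; nra.
Qed.

End RealFacts.

Section GTDerivative.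
Variables (R : realType) (delta K T gamma k1 omega : R).
Local Notation G := (GT delta K T gamma k1 omega).

Lemma jac2_GT (s y : R) : 0 < y ->
  jac2 G s y = \matrix_(i < 2, j < 2)
    if i == 0 :> nat then (if j == 0 :> nat then 1 else - (K * y)^-1)
    else if j == 0 :> nat then 2 * omega * gamma * k1 * cos (2 * omega * s)
    else delta * y `^ (delta - 1).
Proof.
move=> y_gt0; apply/matrixP => i j; rewrite !mxE.
case: i => [[|[|i]] lt_i2] //=; case: j => [[|[|j]] lt_j2] //=;
  rewrite /partial1 /partial2 /GT /=.
- by rewrite derive1E derive_val !subr0.
- have ln_der := is_derive1_ln y_gt0.
  by rewrite derive1E derive_val scaler0 !add0r mul1r subr0 invfM.
- rewrite derive1E derive_val !add0r !mul1r /GRing.scale /=; ring.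
- have pow_der := is_derive1_powR delta y_gt0.
  by rewrite derive1E derive_val addr0.
Qed.

Lemma GT_fixed (s y : R) : 0 < y -> K != 0 -> G s y = (s, y) ->
  ln y = - (K * T) /\ y `^ delta + gamma * (1 + k1 * sin (2 * omega * s)) = y.
Proof.
move=> y_gt0 K_neq0 [s_eq fixed_y]; split=> //.
have : ln y / K = - T by lra.
by move/(canRL (divfK K_neq0)); rewrite mulNr mulrC.
Qed.

End GTDerivative.

Section GTFixedPoints.
Variables (R : realType) (delta K gamma k1 omega : R).
Hypotheses (delta_gt1 : 1 < delta) (K_gt0 : 0 < K).
Let delta_gt0 : 0 < delta. Proof. exact: lt_trans ltr01 delta_gt1. Qed.
Let delta_neq1 : delta != 1. Proof. by rewrite gt_eqF. Qed.
Local Notation G T := (GT delta K T gamma k1 omega).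
Local Notation ystar := (delta `^ (1 - delta)^-1).

Lemma double_eigenvalue_one_jac2_GT (T s y : R) :
  0 < gamma -> 0 < k1 -> 0 < omega -> 0 < y ->
  double_eigenvalue_one (jac2 (G T) s y) <-> y = ystar /\ cos (2 * omega * s) = 0.
Proof.
move=> gamma_gt0 k1_gt0 omega_gt0 y_gt0.
rewrite /double_eigenvalue_one char_poly_mx2_XsubC1_sqr_e00 jac2_GT ?mxE //=.
rewrite mul_powR_eq1 //.
have coef_neq0 : - (K * y)^-1 * (2 * omega * gamma * k1) != 0.
  by rewrite !mulf_neq0 ?oppr_eq0 ?invr_eq0 ?gt_eqF ?mulr_gt0.
rewrite mulrA; split=> -[yE c0]; split=> //; last by rewrite c0 mulr0.
by move/eqP: c0; rewrite mulf_eq0 (negbTE coef_neq0) => /eqP.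
Qed.

Lemma jac2_GT_neq1 (T s y : R) : 0 < y -> jac2 (G T) s y != 1%:M.
Proof.
move=> y_gt0; apply/eqP => /matrixP/(_ 0 1); rewrite jac2_GT // !mxE /=.
by apply/eqP; rewrite oppr_eq0 invr_eq0 mulf_neq0 ?gt_eqF.
Qed.

Lemma GT_fixed_ystar (T s y : R) : 0 < y -> G T s y = (s, y) ->
  y = ystar <-> T = ln delta / (K * (delta - 1)).
Proof.
move=> y_gt0 /GT_fixed[//| | lnE _]; first by rewrite gt_eqF.
have d_neq1 : delta - 1 != 0 by rewrite subr_eq0 gt_eqF.
have d1_neq0 : 1 - delta != 0 by rewrite subr_eq0 lt_eqF.
split=> [yE | TE].
  have lnd : ln delta = (1 - delta) * - (K * T).
    by rewrite -lnE yE ln_powR mulrA mulfV ?mul1r.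
  by rewrite lnd; field; rewrite d_neq1 gt_eqF.
apply: ln_inj; rewrite ?posrE ?powR_gt0 //.
by rewrite lnE ln_powR TE; field; rewrite d_neq1 d1_neq0 gt_eqF.
Qed.

Lemma GT_fixed_at_ystar (T s : R) : G T s ystar = (s, ystar) ->
  gamma * (1 + k1 * sin (2 * omega * s)) =
  delta `^ (1 - delta)^-1 - delta `^ (delta / (1 - delta)).
Proof.
move=> /GT_fixed[| | _]; rewrite ?powR_gt0 ?gt_eqF //.
by rewrite -powRrM mulrC; lra.
Qed.

End GTFixedPoints.

Theorem proposition10 (R : realType) (alpha beta omega gamma k1 : R)
  (halpha : 0 < alpha) (hbeta : beta < 0) (hab : `|beta| < alpha)
  (homega : 0 < omega) (hgamma : 0 < gamma) (hk1 : 0 < k1) :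
  let delta := ((alpha - beta) / (alpha + beta)) ^+ 2 in
  let K := 2 * alpha / (alpha + beta) ^+ 2 in
  let M := delta `^ (1 - delta)^-1 - delta `^ (delta / (1 - delta)) in
  let TM := ln delta / (K * (delta - 1)) in
  ((gamma = M / (1 + k1) \/ gamma = M / (1 - k1)) ->
     forall s y : R, 0 < y ->
       GT delta K TM gamma k1 omega s y = (s, y) ->
       double_eigenvalue_one (jac2 (GT delta K TM gamma k1 omega) s y) /\
       jac2 (GT delta K TM gamma k1 omega) s y != 1%:M)
  /\
  (forall T : R, 0 <= T -> forall s y : R, 0 < y ->
       GT delta K T gamma k1 omega s y = (s, y) ->
       double_eigenvalue_one (jac2 (GT delta K T gamma k1 omega) s y) ->
       (gamma = M / (1 + k1) \/ gamma = M / (1 - k1)) /\ T = TM).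
Proof.
move=> delta K M TM.
have ab_gt0 : 0 < alpha + beta by move: hab; rewrite ltr0_norm //; lra.
have delta_gt1 : 1 < delta by apply: sqr_divBD_gt1; rewrite hbeta.
have K_gt0 : 0 < K by rewrite divr_gt0 ?exprn_gt0 ?mulr_gt0.
have M_neq0 : M != 0 by rewrite subr_eq0 gt_eqF ?ltr_powR_div1B.
have branchP T s : let ystar := delta `^ (1 - delta)^-1 in
    GT delta K T gamma k1 omega s ystar = (s, ystar) ->
    gamma = M / (1 + k1) \/ gamma = M / (1 - k1) <-> cos (2 * omega * s) = 0.
  move=> ystar /(GT_fixed_at_ystar delta_gt1 K_gt0) gM; rewrite cos_eq0_sin_pm1.
  exact: eq_div1D_or_div1B (lt0r_neq0 hgamma) (lt0r_neq0 hk1) M_neq0 gM.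
split=> [gammaM s y y_gt0 fixed | T _ s y y_gt0 fixed].
  have yE := (GT_fixed_ystar delta_gt1 K_gt0 y_gt0 fixed).2 erefl.
  split; last exact: jac2_GT_neq1.
  apply/double_eigenvalue_one_jac2_GT => //; split=> //.
  by rewrite yE in fixed; apply/(branchP _ _ fixed).
case/double_eigenvalue_one_jac2_GT => // yE cos0.
split; last exact/(GT_fixed_ystar delta_gt1 K_gt0 y_gt0 fixed).
by rewrite yE in fixed; apply/(branchP _ _ fixed).
Qed.
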